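(* For every integer $n\ge 4$, $$\mathrm{wdim}_k(K_n\times K_n)=\begin{cases} n^2, & k\in\{2n+1,2n+2\};\\ n^2-1, & k=2n;\\ n^2-n, & k=2n-1 \text{ and } n\ge 5;\\ 13, & (n,k)=(4,7).\end{cases}$$
   Context: $K_n\times K_n$ is the direct product of two complete graphs on $n$ vertices: vertex set $[n]\times[n]$ with $[n]=\{1,\dots,n\}$, and $(i,j)$ adjacent to $(i',j')$ iff $i\ne i'$ and $j\ne j'$. For a connected graph $G$ with distance $d_G$, vertices $x,y,z$ and $S\subseteq V(G)$, let $\Delta_z(x,y)=|d_G(x,z)-d_G(y,z)|$ and $\Delta_S(x,y)=\sum_{z\in S}\Delta_z(x,y)$. A set $S$ is a weak $k$-resolving set if $\Delta_S(x,y)\ge k$ for all distinct $x,y\in V(G)$, and $\mathrm{wdim}_k(G)$ is the minimum cardinality of a weak $k$-resolving set of $G$. *)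

From mathcomp Require Import all_boot.
Set Implicit Arguments. Unset Strict Implicit. Unset Printing Implicit Defensive.

Section Graphs.
Variable T : finType.
Variable e : rel T.

Definition walk_len (x y : T) (m : nat) : bool :=
  [exists p : m.-tuple T, path e x p && (last x p == y)].

(* shortest-path distance: least length of a walk from x to y.
   Every shortest walk is a path, hence has length < #|T|; so in a connected
   graph this is the usual graph distance d_G(x,y). *)
Definition gdist (x y : T) : nat :=
  \big[minn/#|T|]_(m < #|T| | walk_len x y m) m.

Definition gconnected : Prop := forall x y : T, exists m, walk_len x y m.

Definition delta_z (z x y : T) : nat :=
  (gdist x z - gdist y z) + (gdist y z - gdist x z).

Definition delta_S (S : {set T}) (x y : T) : nat :=
  \sum_(z in S) delta_z z x y.

Definition weak_k_resolving (k : nat) (S : {set T}) : bool :=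
  [forall x, forall y, (x != y) ==> (k <= delta_S S x y)].

(* minimum cardinality of a weak k-resolving set
   (default #|T|.+1 if none exists) *)
Definition wdim (k : nat) : nat :=
  \big[minn/#|T|.+1]_(S : {set T} | weak_k_resolving k S) #|S|.
End Graphs.

(* direct product K_n x K_n on [n] x [n] (vertices indexed from 0) *)
Definition KnKn (n : nat) : rel ('I_n * 'I_n) :=
  fun u v => (u.1 != v.1) && (u.2 != v.2).
Arguments KnKn n : clear implicits.

From mathcomp Require Import all_boot zify.
Set Implicit Arguments. Unset Strict Implicit. Unset Printing Implicit Defensive.

(* In K_n x K_n (n >= 3) two distinct vertices are at distance 1 when they
   differ in both coordinates and at distance 2 when they share a line (a row
   or a column), so every Delta_z(x,y) is at most 2 and Delta_V(x,y) can be
   counted exactly: 2n+2 for a pair on a line, 4n-6 for an adjacent pair.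
   As Delta_S = Delta_V - Delta_(V\S), a set is weak k-resolving iff the
   vertices it omits cost no pair more than Delta_V(x,y) - k.  Omitting z
   costs the pair (z, y), y on a line with z, exactly 2; two omitted vertices
   cost some pair 3, or 4 if they share a line; more than n omitted vertices
   contain two on a row.  Conversely, omitting the diagonal costs a pair on a
   line at most 3 and an adjacent pair at most n.  For n = 4, k = 7, four
   omitted vertices must be pairwise adjacent, and then x = (z1.1, z3.2),
   y = (z2.1, z4.2) lose 1 at each of them, leaving 10 - 4 < 7. *)

Lemma bigmin_nat_eq (I : finType) (P : pred I) (F : I -> nat) N i0 :
  P i0 -> F i0 <= N -> (forall i, P i -> F i0 <= F i) ->
  \big[minn/N]_(i | P i) F i = F i0.
Proof.
move=> Pi0 le_N min_i0; apply/eqP; rewrite eqn_leq; apply/andP; split.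
  elim: (index_enum I) (mem_index_enum i0) => [//|j r IH].
  rewrite big_cons inE => /predU1P[<-|/IH le_r]; first by rewrite Pi0 geq_minl.
  by case: (P j) => //; rewrite geq_min le_r orbT.
by apply: (big_ind (leq (F i0))) => // u v le_u le_v; rewrite leq_min le_u.
Qed.

Lemma exists_collision (T T' : finType) (f : T -> T') (A : {set T}) :
  #|T'| < #|A| -> exists u v, [/\ u \in A, v \in A, u != v & f u = f v].
Proof.
move=> lt_A; have /dinjectivePn[u uA [v /andP[neq_vu vA] eq_f]] : ~~ dinjectiveb f A.
  by apply: contraTN lt_A => /dinjectiveP/leq_card_in; rewrite -leqNgt.
by exists u, v; rewrite eq_sym.
Qed.

Lemma sum_pred1 (T : finType) (w : T) : \sum_(z : T) (z == w) = 1.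
Proof. by rewrite (bigD1 w) //= eqxx big1 // => z /negbTE ->. Qed.

Section Graph.
Variables (T : finType) (e : rel T).

Lemma walk_len0 x y : walk_len e x y 0 = (x == y).
Proof.
apply/existsP/eqP => [[p]|<-]; first by rewrite tuple0 => /andP[_ /eqP].
by exists [tuple]; rewrite /= eqxx.
Qed.

Lemma walk_len1 x y : walk_len e x y 1 = e x y.
Proof.
apply/existsP/idP => [[p]|exy]; last by exists [tuple y]; rewrite /= exy eqxx.
by case: p => [[|w [|]]] //= _; rewrite andbT => /andP[exw /eqP <-].
Qed.

Lemma walk_len2 x w y : e x w -> e w y -> walk_len e x y 2.
Proof. by move=> exw ewy; apply/existsP; exists [tuple w; y]; rewrite /= exw ewy eqxx. Qed.

Lemma gdist_eq x y m : m < #|T| -> walk_len e x y m ->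
  (forall j, walk_len e x y j -> m <= j) -> gdist e x y = m.
Proof.
move=> lt_m walk_m min_m.
by apply: (bigmin_nat_eq (i0 := Ordinal lt_m)) => //= [|j]; [exact: ltnW | exact: min_m].
Qed.

Lemma gdist_diam2 x y : 2 < #|T| ->
  (forall u v, u != v -> ~~ e u v -> exists2 w, e u w & e w v) ->
  gdist e x y = if x == y then 0 else if e x y then 1 else 2.
Proof.
move=> T_gt2 diam2; have [<-|neq_xy] := eqVneq x y.
  by apply: gdist_eq; rewrite ?walk_len0 ?eqxx //; lia.
have walk01 j : j < 2 -> walk_len e x y j = (j == 1) && e x y.
  by case: j => [|[|]] // _; rewrite ?walk_len0 ?walk_len1 ?(negbTE neq_xy).
case: ifPn => [exy|nexy]; apply: gdist_eq; try lia.
- by rewrite walk_len1.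
- by case=> //; rewrite walk_len0 (negbTE neq_xy).
- by have [w exw ewy] := diam2 x y neq_xy nexy; exact: walk_len2 exw ewy.
- by move=> j; rewrite leqNgt; apply: contraTN => /walk01->; rewrite (negbTE nexy) andbF.
Qed.

Lemma weak_k_resolvingP k (S : {set T}) :
  reflect (forall x y, x != y -> k <= delta_S e S x y) (weak_k_resolving e k S).
Proof.
apply: (iffP forallP) => [W x y|W x]; last by apply/forallP => y; apply/implyP; exact: W.
by move/forallP: (W x) => /(_ y) /implyP.
Qed.

Lemma wdim_eq k (S : {set T}) : weak_k_resolving e k S ->
  (forall S', weak_k_resolving e k S' -> #|S| <= #|S'|) -> wdim e k = #|S|.
Proof. by move=> WS minS; apply: bigmin_nat_eq => //; rewrite ltnW // ltnS max_card. Qed.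

Lemma delta_S_subset (A B : {set T}) x y : A \subset B -> delta_S e A x y <= delta_S e B x y.
Proof. by move/subsetP => AB; apply: (@sub_le_big _ addn leq leqnn (fun a b => leq_addr b a)). Qed.

Lemma delta_S_setC (S : {set T}) x y : delta_S e S x y + delta_S e (~: S) x y = delta_S e setT x y.
Proof.
rewrite /delta_S [RHS](bigID (mem S)) /=.
by congr (_ + _); apply: eq_bigl => z; rewrite !inE.
Qed.

Lemma delta_S_compl_seq (S : {set T}) x y (s : seq T) : uniq s -> {subset s <= ~: S} ->
  delta_S e S x y + \sum_(z <- s) delta_z e z x y <= delta_S e setT x y.
Proof.
move=> s_uniq s_out; rewrite -(delta_S_setC S) leq_add2l big_uniq //.
by apply: (@sub_le_big _ addn leq leqnn (fun a b => leq_addr b a)) => z /s_out.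
Qed.

Lemma weak_k_resolving_setC k (C : {set T}) :
  (forall x y, x != y -> delta_S e C x y + k <= delta_S e setT x y) ->
  weak_k_resolving e k (~: C).
Proof.
move=> small_C; apply/weak_k_resolvingP => x y /small_C.
by rewrite -(delta_S_setC C) leq_add2l.
Qed.

Lemma delta_zC z x y : delta_z e z x y = delta_z e z y x.
Proof. exact: addnC. Qed.

End Graph.

Lemma exists_ord_neq2 n (a b : 'I_n) : 2 < n -> exists i : 'I_n, (i != a) && (i != b).
Proof.
move=> n_gt2; have : 0 < #|~: [set a; b]|.
  by move: (cardsC [set a; b]); rewrite cards2 card_ord; case: (a != b); lia.
by case/card_gt0P => i; rewrite !inE negb_or; exists i.
Qed.

Section KnKn.
Variable n : nat.
Hypothesis n_gt2 : 2 < n.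
Local Notation V := ('I_n * 'I_n)%type.
Local Notation adj := (KnKn n).
Local Notation dz := (delta_z adj).
Local Notation dS := (delta_S adj).

Definition kdist (x z : V) : nat := if x == z then 0 else if adj x z then 1 else 2.

Lemma KnKn_common_neighbour (x y : V) : exists2 w, adj x w & adj w y.
Proof.
have [i /andP[ix iy]] := exists_ord_neq2 x.1 y.1 n_gt2.
have [j /andP[jx jy]] := exists_ord_neq2 x.2 y.2 n_gt2.
by exists (i, j); rewrite /KnKn /= ?iy ?jy // eq_sym ix eq_sym jx.
Qed.

Lemma gdist_KnKn x y : gdist adj x y = kdist x y.
Proof.
apply: gdist_diam2 => [|u v _ _]; last exact: KnKn_common_neighbour.
by rewrite card_prod card_ord; nia.
Qed.

Lemma delta_zE z x y : dz z x y = (kdist x z - kdist y z) + (kdist y z - kdist x z).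
Proof. by rewrite /delta_z !gdist_KnKn. Qed.

Lemma kdist_refl x : kdist x x = 0.
Proof. by rewrite /kdist eqxx. Qed.

Lemma KnKn_neq x y : adj x y -> x != y.
Proof. by apply: contraTneq => ->; rewrite /KnKn eqxx. Qed.

Lemma KnKnC x y : adj x y = adj y x.
Proof. by rewrite /KnKn eq_sym [y.2 == _]eq_sym. Qed.

Lemma kdist_adj x z : adj x z -> kdist x z = 1.
Proof. by move=> adj_xz; rewrite /kdist adj_xz (negbTE (KnKn_neq adj_xz)). Qed.

Lemma kdist_line x z : x != z -> ~~ adj x z -> kdist x z = 2.
Proof. by rewrite /kdist => /negbTE -> /negbTE ->. Qed.

Lemma delta_z_self x y : x != y -> ~~ adj x y -> dz x x y = 2.
Proof. by move=> ? ?; rewrite delta_zE kdist_refl (@kdist_line y x) 1?eq_sym 1?KnKnC. Qed.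

Lemma delta_z_adj_line z x y : adj x z -> y != z -> ~~ adj y z -> dz z x y = 1.
Proof. by move=> ? ? ?; rewrite delta_zE kdist_adj // kdist_line. Qed.

Lemma delta_z_le2 z x y : dz z x y <= 2.
Proof.
by rewrite delta_zE /kdist; case: (x == z); case: (y == z); case: (adj x z); case: (adj y z).
Qed.

Lemma delta_z_row z x y : x.1 = y.1 -> x != y ->
  dz z x y = (z.2 == x.2) + (z.2 == y.2) + (z == x) + (z == y).
Proof.
case: x y z => [a b] [a' b'] [i j] /= <-; rewrite delta_zE /kdist /KnKn /= !xpair_eqE eqxx /=.
move=> /negbTE neq_bb'; have neq_b'b : (b' == b) = false by rewrite eq_sym.
by case: (eqVneq i a) => _; case: (eqVneq j b) => [->|_]; rewrite ?neq_bb' ?neq_b'b;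
  case: (eqVneq j b').
Qed.

Lemma delta_z_adj z x y : adj x y ->
  dz z x y + 2 * (z == (x.1, y.2)) + 2 * (z == (y.1, x.2)) + (z == x) + (z == y) =
  (z.1 == x.1) + (z.1 == y.1) + (z.2 == x.2) + (z.2 == y.2).
Proof.
case: x y z => [a b] [a' b'] [i j]; rewrite delta_zE /kdist /KnKn /= !xpair_eqE.
move=> /andP[/negbTE neq_aa' /negbTE neq_bb'].
have neq_a'a : (a' == a) = false by rewrite eq_sym.
have neq_b'b : (b' == b) = false by rewrite eq_sym.
by case: (eqVneq i a) => [->|_]; rewrite ?neq_aa' ?neq_a'a; case: (eqVneq i a');
  case: (eqVneq j b) => [->|_]; rewrite ?neq_bb' ?neq_b'b; case: (eqVneq j b').
Qed.

Lemma delta_z_adj_le1 z x y : adj x y -> dz z x y <= 1.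
Proof.
move=> adj_xy; rewrite delta_zE.
have [<-|neq_xz] := eqVneq x z; first by rewrite kdist_refl kdist_adj // KnKnC.
have [<-|neq_yz] := eqVneq y z; first by rewrite kdist_refl kdist_adj.
by rewrite /kdist (negbTE neq_xz) (negbTE neq_yz); case: (adj x z); case: (adj y z).
Qed.

Definition tr (u : V) : V := (u.2, u.1).

Lemma trK : involutive tr.
Proof. by case. Qed.

Lemma kdist_tr u v : kdist (tr u) v = kdist u (tr v).
Proof. by rewrite -[v in LHS]trK /kdist (inj_eq (inv_inj trK)) /KnKn andbC. Qed.

Lemma delta_S_tr (S : {set V}) x y : dS (tr @^-1: S) (tr x) (tr y) = dS S x y.
Proof.
rewrite /delta_S [RHS](reindex_inj (inv_inj trK)) /=.
apply: eq_big => [z|z _]; first by rewrite inE.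
by rewrite !delta_zE !kdist_tr.
Qed.

Lemma sum_fst_eq (a : 'I_n) : \sum_(z : V) (z.1 == a) = n.
Proof.
rewrite -(pair_bigA _ (fun i _ => nat_of_bool (i == a))) /= exchange_big /=.
by under eq_bigr do rewrite sum_pred1; rewrite sum1_card card_ord.
Qed.

Lemma sum_snd_eq (b : 'I_n) : \sum_(z : V) (z.2 == b) = n.
Proof.
rewrite -(pair_bigA _ (fun _ j => nat_of_bool (j == b))) /=.
by under eq_bigr do rewrite sum_pred1; rewrite sum1_card card_ord.
Qed.

Lemma delta_setTE x y : dS setT x y = \sum_z dz z x y.
Proof. by apply: eq_bigl => z; rewrite in_setT. Qed.

Lemma delta_setT_row x y : x.1 = y.1 -> x != y -> dS setT x y = 2 * n + 2.
Proof.
move=> eq_xy1 neq_xy; rewrite delta_setTE.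
under eq_bigr do rewrite delta_z_row //.
by rewrite !big_split /= !sum_snd_eq !sum_pred1; lia.
Qed.

Lemma delta_setT_line x y : x != y -> ~~ adj x y -> dS setT x y = 2 * n + 2.
Proof.
move=> neq_xy; rewrite /KnKn negb_and !negbK.
case/orP => [/eqP/delta_setT_row -> //|/eqP eq_xy2].
rewrite -delta_S_tr preimsetT delta_setT_row //.
by apply: contra neq_xy => /eqP/(can_inj trK) ->.
Qed.

Lemma delta_setT_adj x y : adj x y -> dS setT x y = 4 * n - 6.
Proof.
move=> adj_xy; rewrite delta_setTE.
(* [f] stands for [dz _ x y], which [big_split] would otherwise unfold. *)
suff sum_f (f : V -> nat) : (forall z, f z + 2 * (z == (x.1, y.2)) + 2 * (z == (y.1, x.2))
    + (z == x) + (z == y) = (z.1 == x.1) + (z.1 == y.1) + (z.2 == x.2) + (z.2 == y.2)) ->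
  \sum_z f z = 4 * n - 6 by apply: sum_f => z; exact: delta_z_adj.
move=> f_eq; have : \sum_z _ = \sum_z _ := eq_bigr _ (fun z _ => f_eq z).
by rewrite !big_split /= big1_eq !sum_fst_eq !sum_snd_eq !sum_pred1; lia.
Qed.

Definition diag : {set V} := [set (i, i) | i : 'I_n].

Lemma card_diag : #|diag| = n.
Proof. by rewrite card_imset ?card_ord // => i j []. Qed.

Lemma tr_diag : tr @^-1: diag = diag.
Proof. by rewrite -(can2_imset_pre _ trK trK) -imset_comp; apply: eq_imset. Qed.

Lemma delta_diag_row x y : x.1 = y.1 -> x != y -> dS diag x y <= 3.
Proof.
move=> eq_xy1 neq_xy; rewrite /delta_S big_imset /= => [|i j _ _ [] //].
have -> : 3 = \sum_i ((i == x.2) + (i == y.2) + (i == x.1)) by rewrite !big_split /= !sum_pred1.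
apply: leq_sum => i _; rewrite delta_z_row // -addnA leq_add2l.
case: x y eq_xy1 neq_xy => [a b] [a' b'] /= <-; rewrite !xpair_eqE eqxx /=.
case: (eqVneq i a) => //= _; case: (eqVneq i b) => [->|_]; last by rewrite leq_b1.
by move=> /negbTE->.
Qed.

Lemma delta_diag_line x y : x != y -> ~~ adj x y -> dS diag x y <= 3.
Proof.
move=> neq_xy; rewrite /KnKn negb_and !negbK.
case/orP => [/eqP/delta_diag_row -> //|/eqP eq_xy2].
rewrite -delta_S_tr tr_diag delta_diag_row //.
by apply: contra neq_xy => /eqP/(can_inj trK) ->.
Qed.

Lemma delta_S_adj_le_card (S : {set V}) x y : adj x y -> dS S x y <= #|S|.
Proof. by move=> adj_xy; rewrite -sum1_card; apply: leq_sum => z _; exact: delta_z_adj_le1. Qed.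

Lemma delta_S_line_pair (S : {set V}) (z1 z2 : V) : z1 != z2 -> ~~ adj z1 z2 ->
  z1 \notin S -> z2 \notin S -> dS S z1 z2 + 4 <= 2 * n + 2.
Proof.
move=> neq12 nadj12 z1S z2S.
have s_uniq : uniq [:: z1; z2] by rewrite /= inE neq12.
have s_out : {subset [:: z1; z2] <= ~: S} by move=> z; rewrite !inE => /pred2P[]->.
have := delta_S_compl_seq adj z1 z2 s_uniq s_out.
rewrite !big_cons big_nil delta_z_self // delta_zC delta_z_self 1?eq_sym 1?KnKnC //.
by rewrite delta_setT_line //; lia.
Qed.

Lemma weak_k_resolving_setC_diag k (C : {set V}) : C \subset diag ->
  k <= 2 * n - 1 -> k + #|C| <= 4 * n - 6 -> weak_k_resolving adj k (~: C).
Proof.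
move=> C_diag le_k le_kC; apply: weak_k_resolving_setC => x y neq_xy.
have [adj_xy|nadj_xy] := boolP (adj x y).
  by rewrite delta_setT_adj //; have := delta_S_adj_le_card C adj_xy; lia.
rewrite delta_setT_line //; have := delta_diag_line neq_xy nadj_xy.
by have := delta_S_subset adj x y C_diag; lia.
Qed.

Lemma resolving_omitted_adj k (S : {set V}) u v : 2 * n - 2 < k ->
  weak_k_resolving adj k S -> u \notin S -> v \notin S -> u != v -> adj u v.
Proof.
move=> lt_k /weak_k_resolvingP resS uS vS neq_uv; apply: contraT => nadj_uv.
by have := resS _ _ neq_uv; have := delta_S_line_pair neq_uv nadj_uv uS vS; lia.
Qed.

Lemma delta_z_four_corners (z1 z2 z3 z4 : V) :
  adj z1 z2 -> adj z1 z3 -> adj z1 z4 -> adj z2 z3 -> adj z2 z4 -> adj z3 z4 ->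
  \sum_(z <- [:: z1; z2; z3; z4]) dz z (z1.1, z3.2) (z2.1, z4.2) = 4.
Proof.
move=> /andP[r12 c12] /andP[r13 c13] /andP[r14 c14] /andP[r23 c23] /andP[r24 c24] /andP[_ c34].
rewrite !big_cons big_nil delta_zC [dz z3 _ _]delta_zC !delta_z_adj_line //=.
- by rewrite /KnKn /= r14 c34.
- by apply: contra r24 => /eqP <-.
- by rewrite /KnKn /= eqxx andbF.
- by rewrite /KnKn /= r23 eq_sym c34.
- by apply: contra r13 => /eqP <-.
- by rewrite /KnKn /= eqxx andbF.
- by rewrite /KnKn /= r12 eq_sym c23.
- by apply: contra c24 => /eqP <-.
- by rewrite /KnKn /= eqxx.
- by rewrite /KnKn /= eq_sym r12 eq_sym c14.
- by apply: contra c13 => /eqP <-.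
- by rewrite /KnKn /= eqxx.
Qed.

Lemma wdim_KnKn_gt2n k : 3 < n -> 2 * n < k <= 2 * n + 2 -> wdim adj k = n ^ 2.
Proof.
move=> n_gt3 /andP[lt_k le_k].
have -> : n ^ 2 = #|~: (set0 : {set V})| by rewrite setC0 cardsT card_prod card_ord; lia.
apply: wdim_eq => [|S /weak_k_resolvingP resS].
  apply: weak_k_resolving_setC => x y neq_xy; rewrite [dS set0 x y]big_set0 add0n.
  case: (boolP (adj x y)) => [/delta_setT_adj|/(delta_setT_line neq_xy)] ->; lia.
rewrite setC0 subset_leq_card //; apply/subsetP => z _; apply: contraT => zS.
have [j /andP[neq_j _]] := exists_ord_neq2 z.2 z.2 n_gt2.
have neq_zy : z != (z.1, j) by apply: contra neq_j => /eqP ->.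
have nadj_zy : ~~ adj z (z.1, j) by rewrite /KnKn eqxx.
have z_out : {subset [:: z] <= ~: S} by move=> w; rewrite !inE => /eqP->.
have := delta_S_compl_seq adj z (z.1, j) (isT : uniq [:: z]) z_out.
rewrite big_seq1 delta_z_self // delta_setT_line //.
by have := resS _ _ neq_zy; lia.
Qed.

Lemma wdim_KnKn_2n : 3 < n -> wdim adj (2 * n) = n ^ 2 - 1.
Proof.
move=> n_gt3; have n_gt0 : 0 < n by lia.
pose z0 : V := (Ordinal n_gt0, Ordinal n_gt0).
have -> : n ^ 2 - 1 = #|[set~ z0]| by rewrite cardsC1 card_prod card_ord; lia.
apply: wdim_eq => [|S WS].
  apply: weak_k_resolving_setC => x y neq_xy; rewrite [dS _ x y]big_set1.
  have := delta_z_le2 z0 x y.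
  by case: (boolP (adj x y)) => [/delta_setT_adj|/(delta_setT_line neq_xy)] ->; lia.
rewrite leqNgt; apply/negP => lt_S.
have : 1 < #|~: S| by move: lt_S (cardsC S); rewrite cardsC1 card_prod card_ord; lia.
case/card_gt1P => z1 [z2 []]; rewrite !in_setC => z1S z2S neq12.
have adj12 : adj z1 z2 by apply: resolving_omitted_adj WS z1S z2S neq12; lia.
case/andP: (adj12) => neq12_1 neq12_2; pose y := (z1.1, z2.2).
have neq_1y : z1 != y by apply: contra neq12_2 => /eqP ->.
have neq_y2 : y != z2 by apply: contra neq12_1 => /eqP <-.
have s_uniq : uniq [:: z1; z2] by rewrite /= inE neq12.
have s_out : {subset [:: z1; z2] <= ~: S} by move=> z; rewrite !inE => /pred2P[]->.
have := delta_S_compl_seq adj z1 y s_uniq s_out.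
rewrite !big_cons big_nil delta_z_self ?(delta_z_adj_line adj12) ?delta_setT_line //;
  try by rewrite /KnKn /= eqxx ?andbF.
have /weak_k_resolvingP/(_ _ _ neq_1y) := WS.
by move: (dS S z1 y) => d; clear -n_gt3; lia.
Qed.

Lemma wdim_KnKn_2n_pred : 4 < n -> wdim adj (2 * n - 1) = n ^ 2 - n.
Proof.
move=> n_gt4; have card_Cdiag : #|~: diag| = n ^ 2 - n.
  by rewrite cardsCs setCK card_diag card_prod card_ord; lia.
rewrite -card_Cdiag; apply: wdim_eq => [|S WS].
  by apply: weak_k_resolving_setC_diag; rewrite ?card_diag //; lia.
rewrite leqNgt card_Cdiag; apply/negP => lt_S.
have : #|'I_n| < #|~: S| by move: lt_S (cardsC S); rewrite card_prod !card_ord; lia.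
case/(exists_collision fst) => z1 [z2 []]; rewrite !in_setC => z1S z2S neq12 eq12.
suff : adj z1 z2 by rewrite /KnKn eq12 eqxx.
by apply: resolving_omitted_adj WS z1S z2S neq12; lia.
Qed.

Lemma wdim_KnKn_7 : n = 4 -> wdim adj 7 = 13.
Proof.
move=> n4; have n_gt0 : 0 < n by rewrite n4.
pose z0 : V := (Ordinal n_gt0, Ordinal n_gt0).
have z0_diag : z0 \in diag by apply/imsetP; exists (Ordinal n_gt0).
have card_C : #|diag :\ z0| = n.-1.
  by move: (cardsD1 z0 diag); rewrite z0_diag card_diag => /(congr1 predn) ->.
have card_CC : #|~: (diag :\ z0)| = 13 by rewrite cardsCs setCK card_C card_prod card_ord; nia.
rewrite -card_CC; apply: wdim_eq => [|S WS].
  by apply: weak_k_resolving_setC_diag; rewrite ?card_C ?subsetDl //; lia.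
rewrite leqNgt card_CC; apply/negP => lt_S.
have : 4 <= #|~: S| by move: lt_S (cardsC S); rewrite card_prod card_ord; nia.
case/card_geqP => -[|z1 [|z2 [|z3 [|z4 [|? ?]]]]] [s_uniq //= _ s_out].
have [z1S z2S z3S z4S] : [/\ z1 \notin S, z2 \notin S, z3 \notin S & z4 \notin S].
  by split; rewrite -in_setC; apply: s_out; rewrite !inE eqxx ?orbT.
have clique u v : u \notin S -> v \notin S -> u != v -> adj u v.
  by move=> uS vS; apply: resolving_omitted_adj WS uS vS; lia.
move: (s_uniq); rewrite /= !inE !negb_or => /and4P[/and3P[n12 n13 n14] /andP[n23 n24] n34 _].
have adj_xy : adj (z1.1, z3.2) (z2.1, z4.2).
  by case/andP: (clique _ _ z1S z2S n12) => r12 _; case/andP: (clique _ _ z3S z4S n34) => _ c34;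
    rewrite /KnKn /= r12 c34.
have := delta_S_compl_seq adj (z1.1, z3.2) (z2.1, z4.2) s_uniq s_out.
rewrite delta_z_four_corners ?clique // delta_setT_adj //.
have /weak_k_resolvingP/(_ _ _ (KnKn_neq adj_xy)) := WS.
by move: (dS S _ _) => d; clear -n4; lia.
Qed.
End KnKn.

Unset Implicit Arguments.

Theorem mainTheorem6 (n : nat) : 4 <= n ->
  (forall k, (k = 2 * n + 1 \/ k = 2 * n + 2) -> wdim (KnKn n) k = n ^ 2) /\
  wdim (KnKn n) (2 * n) = n ^ 2 - 1 /\
  (5 <= n -> wdim (KnKn n) (2 * n - 1) = n ^ 2 - n) /\
  (n = 4 -> wdim (KnKn n) 7 = 13).
Proof.
move=> n_ge4; have n_gt2 : 2 < n by lia.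
split; first by move=> k k_eq; apply: wdim_KnKn_gt2n => //; case: k_eq => ->; lia.
split; first exact: wdim_KnKn_2n.
by split; [exact: wdim_KnKn_2n_pred | exact: wdim_KnKn_7].
Qed.
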